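(* Let $q_1,q_2,q_3\in(0,1)$ with $q_1+q_2+q_3=1$. On $\mathbb{C}^3$ with basis $\{|0\rangle,|1\rangle,|2\rangle\}$ define the unitaries $L_1=|0\rangle\langle0|+|1\rangle\langle1|+|2\rangle\langle2|$, $L_2=|1\rangle\langle0|+|2\rangle\langle1|+|0\rangle\langle2|$, $L_3=-|0\rangle\langle0|+|1\rangle\langle1|+|2\rangle\langle2|$, $S_1=|2\rangle\langle0|+|0\rangle\langle1|+|1\rangle\langle2|$, $S_2=-|1\rangle\langle0|+|2\rangle\langle1|+|0\rangle\langle2|$, $S_3=-|2\rangle\langle0|+|0\rangle\langle1|+|1\rangle\langle2|$, and the noisy unitary channels $\mathcal{L}(\rho)=\sum_{k=1}^3 q_kL_k\rho L_k^\dagger$ and $\mathcal{S}(\rho)=\sum_{k=1}^3 q_kS_k\rho S_k^\dagger$. Then the optimal probe for discriminating $\mathcal{L}$ and $\mathcal{S}$ is a non-maximally entangled state: the maximum of the success probability over all probes is attained by a non-maximally entangled pure state of $\mathbb{C}^3\otimes\mathbb{C}^3$.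
   Context: For two channels chosen with equal priors $1/2$, the single-shot success probability with a single-system probe $\rho$ is $\frac12+\frac14\|\mathcal{N}_1(\rho)-\mathcal{N}_2(\rho)\|_1$, and with a bipartite probe $\rho_{AB}$ on $\mathbb{C}^3\otimes\mathbb{C}^{d'}$ (channel acting on $A$) it is $\frac12+\frac14\|(\mathcal{N}_1\otimes\mathrm{id})(\rho_{AB})-(\mathcal{N}_2\otimes\mathrm{id})(\rho_{AB})\|_1$; $\|\cdot\|_1$ is the trace norm. The optimal probe maximizes this over all single-system and bipartite probes. A pure state on $\mathbb{C}^3\otimes\mathbb{C}^3$ is maximally entangled if its reduced states are $\mathbb{I}_3/3$; non-maximally entangled means entangled but not maximally entangled. *)

From HB Require Import structures.
From mathcomp Require Import all_boot all_order all_algebra.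
From mathcomp Require Import classical_sets reals.
From mathcomp Require Import complex mxtens.
Set Implicit Arguments. Unset Strict Implicit. Unset Printing Implicit Defensive.
Import Order.TTheory GRing.Theory Num.Theory.
Local Open Scope ring_scope.
Local Open Scope complex_scope.

Section Quantum.
Variable R : realType.
Local Notation C := R[i].

Definition adj {m n} (A : 'M[C]_(m, n)) : 'M[C]_(n, m) := (map_mx Num.conj A)^T.

(* positive semidefinite: <v|A|v> >= 0 for all v (in the order of C, 0 <= z
   means z is real and nonnegative) *)
Definition psd {n} (A : 'M[C]_n) : Prop :=
  forall v : 'cV[C]_n, 0 <= (adj v *m A *m v) 0 0.

Definition density {n} (rho : 'M[C]_n) : Prop := psd rho /\ \tr rho = 1.

(* trace norm ||X||_1 = tr sqrt(X^dagger X), sqrt = the (unique) PSD square root *)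
Definition trnorm {m n} (X : 'M[C]_(m, n)) : C :=
  \tr (xget 0 [set S : 'M[C]_n | psd S /\ S *m S = adj X *m X]).

Definition ketbra (i j : 'I_3) : 'M[C]_3 := delta_mx i j.
Definition k0 : 'I_3 := @Ordinal 3 0 isT.
Definition k1 : 'I_3 := @Ordinal 3 1 isT.
Definition k2 : 'I_3 := @Ordinal 3 2 isT.

Definition chan (q : 'I_3 -> R) (K : 'I_3 -> 'M[C]_3) (rho : 'M[C]_3) : 'M[C]_3 :=
  \sum_(k < 3) (q k)%:C *: (K k *m rho *m adj (K k)).

Definition chanA (d : nat) (q : 'I_3 -> R) (K : 'I_3 -> 'M[C]_3)
    (rho : 'M[C]_(3 * d)) : 'M[C]_(3 * d) :=
  \sum_(k < 3) (q k)%:C *: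
     ((K k *t (1%:M : 'M[C]_d)) *m rho *m adj (K k *t (1%:M : 'M[C]_d))).

(* success probabilities, equal priors *)
Definition psucc1 q (K1 K2 : 'I_3 -> 'M[C]_3) (rho : 'M[C]_3) : C :=
  1 / 2 + 1 / 4 * trnorm (chan q K1 rho - chan q K2 rho).
Definition psucc2 d q (K1 K2 : 'I_3 -> 'M[C]_3) (rho : 'M[C]_(3 * d)) : C :=
  1 / 2 + 1 / 4 * trnorm (chanA q K1 rho - chanA q K2 rho).

Definition proj {n} (psi : 'cV[C]_n) : 'M[C]_n := psi *m adj psi.
Definition unit_vec {n} (psi : 'cV[C]_n) : Prop := (adj psi *m psi) 0 0 = 1.

Definition ptrB {m n} (rho : 'M[C]_(m * n)) : 'M[C]_m :=
  \matrix_(i, j) \sum_(k < n) rho (mxtens_index (i, k)) (mxtens_index (j, k)).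
Definition ptrA {m n} (rho : 'M[C]_(m * n)) : 'M[C]_n :=
  \matrix_(i, j) \sum_(k < m) rho (mxtens_index (k, i)) (mxtens_index (k, j)).

Definition entangled_pure (psi : 'cV[C]_(3 * 3)) : Prop :=
  ~ exists (a b : 'cV[C]_3), psi = a *t b.
Definition max_entangled (psi : 'cV[C]_(3 * 3)) : Prop :=
  ptrB (proj psi) = 3%:R^-1 *: 1%:M /\ ptrA (proj psi) = 3%:R^-1 *: 1%:M.

Definition Lop (k : 'I_3) : 'M[C]_3 :=
  match val k with
  | 0 => ketbra k0 k0 + ketbra k1 k1 + ketbra k2 k2
  | 1 => ketbra k1 k0 + ketbra k2 k1 + ketbra k0 k2
  | _ => - ketbra k0 k0 + ketbra k1 k1 + ketbra k2 k2
  end.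
Definition Sop (k : 'I_3) : 'M[C]_3 :=
  match val k with
  | 0 => ketbra k2 k0 + ketbra k0 k1 + ketbra k1 k2
  | 1 => - ketbra k1 k0 + ketbra k2 k1 + ketbra k0 k2
  | _ => - ketbra k2 k0 + ketbra k0 k1 + ketbra k1 k2
  end.

Definition qvec (q1 q2 q3 : R) (k : 'I_3) : R :=
  match val k with 0 => q1 | 1 => q2 | _ => q3 end.

End Quantum.

(* Take the probe psi = sum_ij c_ij |i>|j> with c_01 = (1 + i)/2, c_12 = c_20 = 1/2
   and all other c_ij = 0.  Its reduced state is rho_A = diag(1/2, 1/4, 1/4), so
   <(K (x) 1) psi, (K' (x) 1) psi> = tr (K^* K' rho_A), and for the six Kraus
   unitaries K of the two channels the vectors (K (x) 1) psi are orthonormal.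
   Hence the two output states are supported on orthogonal subspaces, the trace
   norm of their difference is 2, and the success probability is 1.  No probe can
   do better, since the trace norm of a difference of two states is at most 2.
   Finally psi is entangled, but not maximally since rho_A <> I/3. *)
From HB Require Import structures.
From mathcomp Require Import all_boot all_order all_algebra.
From mathcomp Require Import classical_sets reals.
From mathcomp Require Import complex mxtens.
From mathcomp Require Import ring.
Import Order.TTheory GRing.Theory Num.Theory.
Local Open Scope ring_scope.
Set Implicit Arguments. Unset Strict Implicit. Unset Printing Implicit Defensive.

Lemma tensmx11 (K : pzRingType) m n : (1%:M : 'M[K]_m) *t (1%:M : 'M[K]_n) = 1%:M.
Proof.
apply/matrixP=> i j.
case: (mxtens_indexP i)=> i0 i1; case: (mxtens_indexP j)=> j0 j1.
rewrite tensmxE !mxE -natrM mulnb.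
by rewrite (inj_eq (can_inj (@mxtens_indexK _ _))) xpair_eqE.
Qed.

Lemma big_mxtens_index (V : nmodType) m n (F : 'I_(m * n) -> V) :
  \sum_k F k = \sum_(i < m) \sum_(j < n) F (mxtens_index (i, j)).
Proof.
rewrite pair_big /= (reindex (@mxtens_index m n)) /=; first by apply: eq_bigr => -[].
exists (@mxtens_unindex m n) => x _; [exact: mxtens_indexK | exact: mxtens_unindexK].
Qed.

Section Adjoint.
Variable R : realType.
Local Notation C := R[i].

Lemma adjE m n (A : 'M[C]_(m, n)) i j : adj A i j = (A j i)^*.
Proof. by rewrite !mxE. Qed.

Lemma adjK m n (A : 'M[C]_(m, n)) : adj (adj A) = A.
Proof. by apply/matrixP=> i j; rewrite !adjE conjCK. Qed.

Lemma adj_conjT m n (A : 'M[C]_(m, n)) : adj A = map_mx Num.conj A^T.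
Proof. by rewrite /adj map_trmx. Qed.

Lemma adjM m n p (A : 'M[C]_(m, n)) (B : 'M[C]_(n, p)) : adj (A *m B) = adj B *m adj A.
Proof. by rewrite /adj map_mxM trmx_mul. Qed.

Lemma adjD m n (A B : 'M[C]_(m, n)) : adj (A + B) = adj A + adj B.
Proof. by apply/matrixP=> i j; rewrite !mxE rmorphD. Qed.

Lemma adjB m n (A B : 'M[C]_(m, n)) : adj (A - B) = adj A - adj B.
Proof. by apply/matrixP=> i j; rewrite !mxE rmorphB. Qed.

Lemma adjZ m n c (A : 'M[C]_(m, n)) : adj (c *: A) = c^* *: adj A.
Proof. by apply/matrixP=> i j; rewrite !mxE rmorphM. Qed.

Lemma adj_sum m n (I : finType) (F : I -> 'M[C]_(m, n)) :
  adj (\sum_k F k) = \sum_k adj (F k).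
Proof.
elim/big_rec2: _ => [|k y1 y2 _ <-]; last by rewrite adjD.
by apply/matrixP=> i j; rewrite !mxE rmorph0.
Qed.

Lemma adj1 n : adj (1%:M : 'M[C]_n) = 1%:M.
Proof. by apply/matrixP=> i j; rewrite !mxE eq_sym rmorph_nat. Qed.

Lemma adj_tens m n p q (A : 'M[C]_(m, n)) (B : 'M[C]_(p, q)) :
  adj (A *t B) = adj A *t adj B.
Proof. by rewrite /adj map_mxT trmx_tens. Qed.

Lemma proj_adj n (v : 'cV[C]_n) : adj (proj v) = proj v.
Proof. by rewrite /proj adjM adjK. Qed.

Lemma cV_norm_eq0 n (g : 'cV[C]_n) : (adj g *m g) 0 0 = 0 -> g = 0.
Proof.
rewrite mxE => /eqP; rewrite psumr_eq0 => [/allP hg|i _]; last first.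
  by rewrite adjE mulrC mul_conjC_ge0.
apply/matrixP=> i j; rewrite [j]ord1 mxE.
have := hg i (mem_index_enum i); rewrite adjE mulf_eq0 conjC_eq0.
by case/orP => /eqP.
Qed.

End Adjoint.

Section PositiveSemidefinite.
Variable R : realType.
Local Notation C := R[i].

Lemma quad_delta n (M : 'M[C]_n) i j :
  adj (delta_mx i 0 : 'cV[C]_n) *m M *m delta_mx j 0 = (M i j)%:M.
Proof.
have -> : adj (delta_mx i 0 : 'cV[C]_n) = delta_mx 0 i.
  by apply/matrixP=> a b; rewrite !mxE rmorph_nat andbC.
by rewrite -rowE -colE; apply/matrixP=> a b; rewrite [a]ord1 [b]ord1 !mxE eqxx.
Qed.

Lemma psd_diag n (M : 'M[C]_n) i : psd M -> 0 <= M i i.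
Proof. by move=> /(_ (delta_mx i 0)); rewrite quad_delta mxE eqxx. Qed.

Lemma psd_conj_entry n (M : 'M[C]_n) i j : psd M -> M j i = (M i j)^*.
Proof.
move=> pM.
have offdiag c : c * M i j + c^* * M j i \is Num.real.
  have := pM (delta_mx i 0 + c *: delta_mx j 0).
  rewrite adjD adjZ !mulmxDl !mulmxDr -!scalemxAl -!scalemxAr !quad_delta !mxE eqxx !mulr1n.
  move=> /ger0_real quad.
  have -> : c * M i j + c^* * M j i = M i i + c * M i j + (c^* * M j i + c^* * (c * M j j))
                                      - M i i - c^* * c * M j j by ring.
  apply: realB; first (apply: realB => //; exact/ger0_real/psd_diag).
  by apply: realM; apply/ger0_real; rewrite ?psd_diag // mulrC mul_conjC_ge0.
have h1 : (M i j)^* + (M j i)^* = M i j + M j i.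
  by move/CrealP: (offdiag 1); rewrite rmorph1 !mul1r rmorphD.
have h2 : - 'i * (M i j)^* + 'i * (M j i)^* = 'i * M i j - 'i * M j i.
  move/CrealP: (offdiag 'i); rewrite rmorphD !rmorphM /= conjCK (@conjCi C) => ->.
  ring.
have : 2%:R * 'i * ((M j i)^* - M i j) = 0.
  have -> : 2%:R * 'i * ((M j i)^* - M i j) =
      'i * ((M i j)^* + (M j i)^* - (M i j + M j i))
      + (- 'i * (M i j)^* + 'i * (M j i)^* - ('i * M i j - 'i * M j i)) by ring.
  by rewrite h1 h2 !subrr mulr0 addr0.
move/eqP; rewrite !mulf_eq0 pnatr_eq0 (negbTE (@neq0Ci _)) /= subr_eq0 => /eqP <-.
by rewrite conjCK.
Qed.

Lemma psd_adj n (M : 'M[C]_n) : psd M -> adj M = M.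
Proof. by move=> pM; apply/matrixP=> i j; rewrite adjE -psd_conj_entry. Qed.

Lemma psd_mulmx_adj m n (K : 'M[C]_(m, n)) (M : 'M[C]_n) : psd M -> psd (K *m M *m adj K).
Proof. by move=> pM v; have := pM (adj K *m v); rewrite adjM adjK !mulmxA. Qed.

Lemma psdD n (A B : 'M[C]_n) : psd A -> psd B -> psd (A + B).
Proof. by move=> pA pB v; rewrite mulmxDr mulmxDl [X in 0 <= X]mxE addr_ge0. Qed.

Lemma psdZ n (c : C) (A : 'M[C]_n) : 0 <= c -> psd A -> psd (c *: A).
Proof. by move=> c0 pA v; rewrite -scalemxAr -scalemxAl [X in 0 <= X]mxE mulr_ge0. Qed.

Lemma psd_sum n (I : finType) (F : I -> 'M[C]_n) :
  (forall k, psd (F k)) -> psd (\sum_k F k).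
Proof.
move=> pF; elim/big_rec: _ => [v|k M _ pM]; last exact: psdD.
by rewrite mulmx0 mul0mx mxE.
Qed.

Lemma psd_proj n (v : 'cV[C]_n) : psd (proj v).
Proof.
move=> w; rewrite /proj !mulmxA -(mulmxA (adj w *m v)) mxE big_ord1.
by rewrite -[adj w *m v]adjK adjM adjK adjE mulrC mul_conjC_ge0.
Qed.

(* With [g := S v - c v], [(S + c) g = 0] forces [g^* S g + c |g|^2 = 0], hence
   [g = 0] when [c > 0]; for [c = 0] use [|S v|^2 = v^* S^2 v]. *)
Lemma psd_sqrt_eigen n (S : 'M[C]_n) (v : 'cV[C]_n) (c : C) : psd S -> 0 <= c ->
  S *m S *m v = (c * c) *: v -> S *m v = c *: v.
Proof.
move=> pS; rewrite le0r => /orP[/eqP-> | c0] hv.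
  rewrite scale0r; apply: cV_norm_eq0.
  by rewrite adjM (psd_adj pS) -mulmxA (mulmxA S) hv mulr0 scale0r mulmx0 mxE.
suff : S *m v - c *: v = 0 by move/eqP; rewrite subr_eq0 => /eqP.
have : (S + c%:M) *m (S *m v - c *: v) = 0.
  rewrite mulmxDl !mulmxBr !mul_scalar_mx -!scalemxAr mulmxA hv scalerA.
  by rewrite addrA subrK subrr.
move: (S *m v - c *: v) => g /(congr1 (fun M => (adj g *m M) 0 0)).
rewrite /= mulmx0 mulmxA mulmxDr mulmxDl mul_mx_scalar -scalemxAl [RHS]mxE [LHS]mxE [X in _ + X]mxE.
move=> /eqP; rewrite paddr_eq0 ?mulr_ge0 ?pS ?(ltW c0) //; last first.
  by rewrite mxE sumr_ge0 // => i _; rewrite adjE mulrC mul_conjC_ge0.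
by case/andP=> _; rewrite mulf_eq0 (gt_eqF c0) /= => /eqP /cV_norm_eq0.
Qed.

End PositiveSemidefinite.

Section TraceNorm.
Variable R : realType.
Local Notation C := R[i].

Lemma mxtrace_unitary_conj n (U M : 'M[C]_n) :
  adj U *m U = 1%:M -> \tr (U *m M *m adj U) = \tr M.
Proof. by move=> uU; rewrite mxtrace_mulC mulmxA uU mul1mx. Qed.

Lemma psd_sqr_diag_le n (T : 'M[C]_n) i : psd T -> T i i * T i i <= (T *m T) i i.
Proof.
move=> pT; rewrite mxE (bigD1 i) //= lerDl sumr_ge0 // => j _.
by rewrite (psd_conj_entry i j pT) mul_conjC_ge0.
Qed.

(* Diagonalize the Hermitian [A - B] by a unitary [P]: in that basis
   [S_ii^2 <= ((A - B)^2)_ii = (A_ii - B_ii)^2 <= (A_ii + B_ii)^2]. *)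
Lemma mxtrace_sqrt_subr_le n (A B S : 'M[C]_n) : psd A -> psd B -> psd S ->
  S *m S = adj (A - B) *m (A - B) -> \tr S <= \tr A + \tr B.
Proof.
move=> pA pB pS hS.
set X := A - B.
have hX : adj X = X by rewrite adjB !psd_adj.
have nX : X \is normalmx by apply/normalmxP; rewrite -adj_conjT hX.
have uP : spectralmx X \is unitarymx := spectral_unitarymx X.
have := orthomx_spectralP nX; rewrite invmx_unitary // -adj_conjT.
set P := spectralmx X; set D := diag_mx (spectral_diag X) => hXd.
have PPa : P *m adj P = 1%:M by rewrite adj_conjT; apply/unitarymxP.
have PaP : adj P *m P = 1%:M.
  by rewrite adj_conjT -invmx_unitary // mulVmx // unitarymx_unit.
have hD : P *m X *m adj P = D.
  by rewrite hXd !mulmxA PPa mul1mx -mulmxA PPa mulmx1.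
set T := P *m S *m adj P; set A' := P *m A *m adj P; set B' := P *m B *m adj P.
have pT : psd T by apply: psd_mulmx_adj.
have pA' : psd A' by apply: psd_mulmx_adj.
have pB' : psd B' by apply: psd_mulmx_adj.
have TT : T *m T = D *m D.
  rewrite -hD /T !mulmxA -[P *m S *m adj P *m P]mulmxA PaP mulmx1.
  by rewrite -[P *m S *m S]mulmxA hS hX !mulmxA -[P *m X *m adj P *m P]mulmxA PaP mulmx1.
have DAB : D = A' - B' by rewrite -hD /X mulmxBr mulmxBl.
have diag_le i : T i i <= A' i i + B' i i.
  have a0 := psd_diag i pA'; have b0 := psd_diag i pB'.
  rewrite -(ler_sqr (x := T i i)) ?nnegrE ?addr_ge0 ?psd_diag //.
  apply: (le_trans (y := (D *m D) i i)); first by rewrite expr2 -TT psd_sqr_diag_le.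
  have Dii : D i i = spectral_diag X 0 i by rewrite mxE eqxx mulr1n.
  have DAii : D i i = A' i i - B' i i by rewrite DAB !mxE.
  rewrite mul_diag_mx mxE -Dii DAii.
  rewrite -subr_ge0 (_ : _ - _ = 4%:R * (A' i i * B' i i)); last by ring.
  by rewrite !mulr_ge0.
rewrite -(mxtrace_unitary_conj S PaP) -(mxtrace_unitary_conj A PaP).
rewrite -(mxtrace_unitary_conj B PaP) -/T -/A' -/B' /mxtrace -big_split /=.
by apply: ler_sum => i _; apply: diag_le.
Qed.

Definition orthonormal n (I : finType) (f : I -> 'cV[C]_n) :=
  forall a b, adj (f a) *m f b = (a == b)%:R%:M.

Lemma orthoproj_apply n (I : finType) (f : I -> 'cV[C]_n) (al : I -> C) b :
  orthonormal f -> (\sum_a al a *: proj (f a)) *m f b = al b *: f b.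
Proof.
move=> hf; rewrite mulmx_suml (bigD1 b) //= big1 ?addr0.
  by rewrite -scalemxAl /proj -mulmxA hf eqxx mulmx1.
move=> a nab; rewrite -scalemxAl /proj -mulmxA hf (negbTE nab).
by rewrite mul_mx_scalar scale0r scaler0.
Qed.

Lemma orthoproj_mul n (I : finType) (f : I -> 'cV[C]_n) (al be : I -> C) :
  orthonormal f ->
  (\sum_a al a *: proj (f a)) *m (\sum_b be b *: proj (f b)) =
  \sum_a (al a * be a) *: proj (f a).
Proof.
move=> hf; rewrite mulmx_sumr; apply: eq_bigr => b _.
by rewrite -scalemxAr /proj mulmxA orthoproj_apply // -scalemxAl scalerA mulrC.
Qed.

Lemma psd_eigen_sum_le n (I : finType) (f : I -> 'cV[C]_n) (lam : I -> C) (S : 'M[C]_n) :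
  orthonormal f -> psd S -> (forall a, S *m f a = lam a *: f a) ->
  \sum_a lam a <= \tr S.
Proof.
move=> hf pS hS.
set P := \sum_a 1 *: proj (f a).
have PP : P *m P = P.
  by rewrite /P orthoproj_mul //; apply: eq_bigr => a _; rewrite mulr1.
have hP : adj P = P.
  by rewrite /P adj_sum; apply: eq_bigr => a _; rewrite adjZ rmorph1 proj_adj.
set Q := 1%:M - P.
have QQ : Q *m Q = Q by rewrite /Q mulmxBl mul1mx mulmxBr mulmx1 PP subrr subr0.
have hQ : adj Q = Q by rewrite /Q adjB adj1 hP.
have -> : \tr S = \tr (S *m P) + \tr (S *m Q).
  by rewrite -mxtraceD -mulmxDr /Q addrC subrK mulmx1.
have -> : \tr (S *m P) = \sum_a lam a.
  rewrite /P mulmx_sumr raddf_sum /=; apply: eq_bigr => a _.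
  by rewrite scale1r /proj mulmxA hS -scalemxAl mxtraceZ mxtrace_mulC hf eqxx mxtrace1 mulr1.
rewrite lerDl (_ : \tr (S *m Q) = \tr (Q *m S *m adj Q)); last first.
  by rewrite hQ [RHS]mxtrace_mulC mulmxA QQ mxtrace_mulC.
by rewrite /mxtrace sumr_ge0 // => i _; apply/psd_diag/psd_mulmx_adj.
Qed.

(* [trnorm] picks some psd square root, or [0] if there is none; this bound and
   [mxtrace_sqrt_subr_le] hold for every psd square root. *)
Lemma trnorm_orthoproj_ge n (I : finType) (f : I -> 'cV[C]_n) (al : I -> C) :
  orthonormal f -> \sum_a `|al a| <= trnorm (\sum_a al a *: proj (f a)).
Proof.
move=> hf; set D := \sum_a al a *: proj (f a).
set S0 := \sum_a `|al a| *: proj (f a).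
have DD : adj D *m D = S0 *m S0.
  rewrite /D adj_sum (eq_bigr (fun a => (al a)^* *: proj (f a))) => [|a _]; last first.
    by rewrite adjZ proj_adj.
  rewrite !orthoproj_mul //; apply: eq_bigr => a _.
  by rewrite -expr2 normCKC.
have pS0 : psd S0 by apply: psd_sum => a; apply: psdZ (psd_proj _).
rewrite /trnorm; case: xgetP => [S _ [pS hS] | /(_ S0)]; last by case; split.
apply: (psd_eigen_sum_le hf pS) => a.
by apply: psd_sqrt_eigen; rewrite // hS DD orthoproj_mul // orthoproj_apply.
Qed.

End TraceNorm.

Section MixedUnitary.
Variable R : realType.
Local Notation C := R[i].

(* [chan q K] and [chanA q K] are, by conversion, [mixed_unitary q K] and
   [mixed_unitary q (fun k => K k *t 1)]. *)
Definition mixed_unitary (I : finType) n (q : I -> R) (U : I -> 'M[C]_n) (rho : 'M[C]_n) :=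
  \sum_k (q k)%:C%C *: (U k *m rho *m adj (U k)).

Variables (I : finType) (n : nat) (q : I -> R).
Hypotheses (q_ge0 : forall k, 0 <= q k) (q_sum1 : \sum_k q k = 1).

Lemma psd_mixed_unitary (U : I -> 'M[C]_n) rho : psd rho -> psd (mixed_unitary q U rho).
Proof.
move=> pr; apply: psd_sum => k; apply: psdZ; first by rewrite ler0c.
exact: psd_mulmx_adj.
Qed.

Lemma mxtrace_mixed_unitary (U : I -> 'M[C]_n) rho :
  (forall k, adj (U k) *m U k = 1%:M) -> \tr (mixed_unitary q U rho) = \tr rho.
Proof.
move=> uU; rewrite raddf_sum /=.
under eq_bigr => k _ do rewrite mxtraceZ mxtrace_unitary_conj //.
by rewrite -mulr_suml -rmorph_sum /= q_sum1 mul1r.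
Qed.

Lemma trnorm_mixed_unitaryB_le (U1 U2 : I -> 'M[C]_n) rho :
  (forall k, adj (U1 k) *m U1 k = 1%:M) -> (forall k, adj (U2 k) *m U2 k = 1%:M) ->
  density rho -> trnorm (mixed_unitary q U1 rho - mixed_unitary q U2 rho) <= 2%:R.
Proof.
move=> u1 u2 [pr tr1]; rewrite /trnorm; case: xgetP => [S _ [pS hS] | _]; last first.
  by rewrite mxtrace0 ler0n.
apply: le_trans (mxtrace_sqrt_subr_le (psd_mixed_unitary U1 pr)
                                      (psd_mixed_unitary U2 pr) pS hS) _.
by rewrite !mxtrace_mixed_unitary // tr1.
Qed.

End MixedUnitary.

Lemma unitary_tens1 (R : realType) n (U : 'M[R[i]]_n) m : adj U *m U = 1%:M ->
  adj (U *t (1%:M : 'M_m)) *m (U *t 1%:M) = 1%:M.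
Proof. by move=> uU; rewrite adj_tens adj1 tensmx_mul uU mulmx1 tensmx11. Qed.

Section Probe.
Variable R : realType.
Local Notation C := R[i].

Lemma sum_ord3 (V : nmodType) (F : 'I_3 -> V) : \sum_i F i = F k0 + F k1 + F k2.
Proof.
rewrite !big_ord_recl big_ord0 addr0 addrA.
by congr (F _ + F _ + F _); apply: val_inj.
Qed.

Definition probe_amp (i j : 'I_3) : C :=
  match val i, val j with
  | 0, 1 => (1 + 'i) / 2%:R
  | 1, 2 | 2, 0 => 1 / 2%:R
  | _, _ => 0
  end.

Definition probe : 'cV[C]_(3 * 3) :=
  \col_k probe_amp (mxtens_unindex k).1 (mxtens_unindex k).2.

Lemma probeE i j : probe (mxtens_index (i, j)) 0 = probe_amp i j.
Proof. by rewrite mxE mxtens_indexK. Qed.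

Lemma conj_half : (1 / 2%:R : C)^* = 1 / 2%:R.
Proof. by rewrite rmorphM rmorph1 fmorphV rmorph_nat. Qed.

Lemma sqr_norm_amp01 : ((1 + 'i) / 2%:R : C)^* * ((1 + 'i) / 2%:R) = 1 / 2%:R.
Proof.
rewrite rmorphM rmorphD rmorph1 fmorphV rmorph_nat /= (@conjCi C).
have h2 : (2%:R : C) != 0 by rewrite pnatr_eq0.
apply/eqP; rewrite -subr_eq0; apply/eqP.
by transitivity (- ('i * 'i + 1) / 4%:R : C); [field | rewrite -expr2 sqrCi addNr oppr0 mul0r].
Qed.

(* [tr (M rho_A)] for the reduced state [rho_A = diag(1/2, 1/4, 1/4)] of the probe. *)
Definition probe_weight (M : 'M[C]_3) :=
  1 / 2%:R * M k0 k0 + 1 / 4%:R * M k1 k1 + 1 / 4%:R * M k2 k2.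

Lemma probe_quad_tens1 (M : 'M[C]_3) :
  (adj probe *m (M *t (1%:M : 'M[C]_3)) *m probe) 0 0 = probe_weight M.
Proof.
rewrite mxE big_mxtens_index.
under eq_bigr => i _ do under eq_bigr => j _ do rewrite mxE big_mxtens_index probeE.
under eq_bigr => i _ do under eq_bigr => j _ do
  under eq_bigr => i' _ do under eq_bigr => j' _ do rewrite adjE probeE tensmxE.
rewrite !sum_ord3 /probe_weight /probe_amp /= !mxE /= conj_half conjC0.
have := sqr_norm_amp01; set a := ((1 + 'i) / 2%:R)^*; set b := (1 + 'i) / 2%:R => hab.
apply/eqP; rewrite -subr_eq0; apply/eqP.
by transitivity ((a * b - 1 / 2%:R) * M k0 k0); [field | rewrite hab subrr mul0r].
Qed.

Lemma probe_unit : unit_vec probe.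
Proof.
rewrite /unit_vec -[adj probe](mulmx1) -tensmx11 probe_quad_tens1 /probe_weight !mxE /=.
by field.
Qed.

Lemma amp01_neq0 : ((1 + 'i) / 2%:R : C) != 0.
Proof.
apply/eqP => h; have := sqr_norm_amp01; rewrite h mulr0 => /eqP.
by rewrite eq_sym mul1r invr_eq0 pnatr_eq0.
Qed.

(* A product state has [c_01 c_12 = c_02 c_11]; here [c_11 = 0] but [c_01 c_12 <> 0]. *)
Lemma probe_entangled : entangled_pure probe.
Proof.
move=> [a [b hab]].
have E i j : probe_amp i j = a i 0 * b j 0.
  rewrite -probeE hab mxE mxtens_indexK /=.
  by congr (a _ _ * b _ _); apply: val_inj; rewrite /= ?ord1.
have := E k0 k1; have := E k1 k2; have := E k1 k1.
rewrite /probe_amp /= => e11 e12 e01.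
have : ((1 + 'i) / 2%:R) * (1 / 2%:R) = 0 :> C.
  by rewrite e01 e12 mulrACA [a k0 0 * _]mulrC mulrACA -e11 mul0r.
by move/eqP; rewrite mulf_eq0 (negbTE amp01_neq0) mul1r invr_eq0 pnatr_eq0.
Qed.

Lemma probe_not_max_entangled : ~ max_entangled probe.
Proof.
move=> [/matrixP/(_ k0 k0)] + _.
rewrite /ptrB /proj !mxE sum_ord3 !mxE !big_ord1 !adjE !probeE /probe_amp /=.
rewrite !mul0r add0r addr0 mulrC sqr_norm_amp01 mulr1 mul1r.
by move=> /(congr1 GRing.inv); rewrite !invrK => /eqP; rewrite eqr_nat.
Qed.
End Probe.

Section Kraus.
Variable R : realType.
Local Notation C := R[i].

Definition kraus (x : bool * 'I_3) : 'M[C]_3 := if x.1 then Sop R x.2 else Lop R x.2.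

(* The Kraus unitaries are signed permutation matrices: column [j] of [kraus x]
   has its single nonzero entry, [-1] or [1], in row [j + kraus_shift x] (mod 3).
   With integer entries the Gram computations below close by evaluation. *)
Definition kraus_shift (x : bool * 'I_3) : nat :=
  match x.1, val x.2 with false, 1 | true, 1 => 1 | false, _ => 0 | true, _ => 2 end.
Definition kraus_flip (x : bool * 'I_3) : bool :=
  match x.1, val x.2 with false, 2 | true, 1 | true, 2 => true | _, _ => false end.
Definition kraus_int (x : bool * 'I_3) (i j : 'I_3) : int :=
  (if kraus_flip x && (val j == 0%N) then -1 else 1) *
  ((val i == (val j + kraus_shift x) %% 3)%N : int).

Lemma krausE x i j : kraus x i j = (kraus_int x i j)%:~R.
Proof.
case: x => [[] [[|[|[|//]]] ?]]; case: i => [[|[|[|//]]] ?]; case: j => [[|[|[|//]]] ?];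
by rewrite /kraus /Lop /Sop /ketbra /kraus_int /= !mxE /= ?oppr0 ?addr0 ?add0r.
Qed.

Lemma kraus_int_unitary x (i j : 'I_3) :
  \sum_(m < 3) kraus_int x m i * kraus_int x m j = (i == j)%:Z.
Proof.
case: x => [[] [[|[|[|//]]] ?]]; case: i => [[|[|[|//]]] ?]; case: j => [[|[|[|//]]] ?];
by rewrite sum_ord3.
Qed.

Lemma kraus_int_gram x y :
  2 * (\sum_(m < 3) kraus_int x m k0 * kraus_int y m k0)
  + \sum_(m < 3) kraus_int x m k1 * kraus_int y m k1
  + \sum_(m < 3) kraus_int x m k2 * kraus_int y m k2 = 4 * (x == y)%:Z.
Proof.
case: x => [[] [[|[|[|//]]] ?]]; case: y => [[] [[|[|[|//]]] ?]];
by rewrite !sum_ord3.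
Qed.

Lemma adj_kraus_mulE x y i j :
  (adj (kraus x) *m kraus y) i j = (\sum_(m < 3) kraus_int x m i * kraus_int y m j)%:~R.
Proof.
have conj_intr (z : int) : (z%:~R : C)^* = z%:~R by exact: rmorph_int.
rewrite mxE rmorph_sum; apply: eq_bigr => m _.
by rewrite adjE !krausE conj_intr -intrM.
Qed.

Lemma kraus_unitary x : adj (kraus x) *m kraus x = 1%:M.
Proof.
by apply/matrixP=> i j; rewrite adj_kraus_mulE kraus_int_unitary mxE; case: (i == j).
Qed.

Lemma probe_weight_kraus x y : probe_weight (adj (kraus x) *m kraus y) = (x == y)%:R.
Proof.
have := congr1 (fun z : int => z%:~R : C) (kraus_int_gram x y).
rewrite /probe_weight !adj_kraus_mulE /= !rmorphD !rmorphM /= => h.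
apply: (@mulfI _ 4%:R); first by rewrite pnatr_eq0.
by rewrite [RHS](_ : _ = 4%:~R * (x == y)%:Z%:~R) // -h; field.
Qed.

Definition probe_image x : 'cV[C]_(3 * 3) := (kraus x *t (1%:M : 'M[C]_3)) *m probe R.

Lemma probe_image_orthonormal : orthonormal probe_image.
Proof.
move=> x y; rewrite /probe_image adjM adj_tens adj1 !mulmxA.
rewrite -(mulmxA (adj (probe R))) tensmx_mul mulmx1.
by rewrite [LHS]mx11_scalar probe_quad_tens1 probe_weight_kraus.
Qed.

Lemma chanA_probeB (q : 'I_3 -> R) :
  chanA q (@Lop R) (proj (probe R)) - chanA q (@Sop R) (proj (probe R)) =
  \sum_(x : bool * 'I_3) ((-1) ^+ x.1 * (q x.2)%:C%C) *: proj (probe_image x).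
Proof.
rewrite -(pair_big xpredT xpredT (fun (b : bool) (k : 'I_3) => ((-1) ^+ b * (q k)%:C%C) *: proj (probe_image (b, k)))).
rewrite big_bool /= addrC -sumrN; congr (_ + _); apply: eq_bigr => k _.
  by rewrite expr0 mul1r /proj /probe_image adjM !mulmxA.
by rewrite expr1 mulN1r scaleNr /proj /probe_image adjM !mulmxA.
Qed.

Lemma trnorm_chanA_probeB (q : 'I_3 -> R) : (forall k, 0 <= q k) -> \sum_k q k = 1 ->
  2%:R <= trnorm (chanA q (@Lop R) (proj (probe R)) - chanA q (@Sop R) (proj (probe R))).
Proof.
move=> q_ge0 q_sum1; rewrite chanA_probeB.
apply: le_trans (trnorm_orthoproj_ge _ probe_image_orthonormal).
under eq_bigr => x _ do rewrite normrM normrX normrN1 expr1n mul1r ger0_norm ?ler0c //.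
rewrite -(pair_big xpredT xpredT (fun (_ : bool) (k : 'I_3) => (q k)%:C%C)) big_bool /=.
by rewrite -rmorph_sum q_sum1 rmorph1.
Qed.
End Kraus.

Lemma psucc_mono (R : realType) (t t' : R[i]) :
  t <= t' -> 1 / 2%:R + 1 / 4%:R * t <= 1 / 2%:R + 1 / 4%:R * t'.
Proof. by move=> le_tt'; rewrite lerD2l ler_pM2l // mul1r invr_gt0 ltr0n. Qed.

Unset Implicit Arguments.

Theorem theorem8 (R : realType) (q1 q2 q3 : R) :
  0 < q1 < 1 -> 0 < q2 < 1 -> 0 < q3 < 1 -> q1 + q2 + q3 = 1 ->
  exists psi : 'cV[R[i]]_(3 * 3),
    [/\ unit_vec psi, entangled_pure psi, ~ max_entangled psi,
        (forall rho : 'M[R[i]]_3, density rho ->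
           psucc1 (qvec q1 q2 q3) (@Lop R) (@Sop R) rho
           <= psucc2 (qvec q1 q2 q3) (@Lop R) (@Sop R) (proj psi))
      & (forall (d : nat) (rho : 'M[R[i]]_(3 * d)), density rho ->
           psucc2 (qvec q1 q2 q3) (@Lop R) (@Sop R) rho
           <= psucc2 (qvec q1 q2 q3) (@Lop R) (@Sop R) (proj psi))].
Proof.
move=> /andP[q1_gt0 _] /andP[q2_gt0 _] /andP[q3_gt0 _] q_sum.
set q := qvec q1 q2 q3.
have q_ge0 k : 0 <= q k by rewrite /q /qvec; case: k => [[|[|[|//]]] ?]; apply: ltW.
have q_sum1 : \sum_k q k = 1 by rewrite sum_ord3.
have uL k : adj (Lop R k) *m Lop R k = 1%:M := kraus_unitary R (false, k).
have uS k : adj (Sop R k) *m Sop R k = 1%:M := kraus_unitary R (true, k).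
have perfect_probe := trnorm_chanA_probeB q_ge0 q_sum1.
exists (probe R); split.
- exact: probe_unit.
- exact: probe_entangled.
- exact: probe_not_max_entangled.
- move=> rho rho_state; apply/psucc_mono/(le_trans _ perfect_probe).
  exact: trnorm_mixed_unitaryB_le.
- move=> d rho rho_state; apply/psucc_mono/(le_trans _ perfect_probe).
  by apply: trnorm_mixed_unitaryB_le => // k; apply: unitary_tens1.
Qed.
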